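(* Let $q$ be an odd prime power and let $r$ be a divisor of $q-1$ such that $1<r<\frac{\sqrt{q}}{2}-\frac{2\log_2 q+1}{4}$. Then there exists a $2$-blocking set of the Hermitian curve $\mathcal{H}_q$ of size $k$ for some integer $k$ satisfying $$\frac{q^3-3q^2-2q}{r}+2q^2-q+2-2\lceil\log_2 q+1\rceil\leq k\leq\frac{q^3-3q^2-2q}{r}+2q^2+q+2+2\lceil\log_2 q+1\rceil.$$
   Context: $\mathcal{H}_q$ is the Hermitian curve in the Desarguesian projective plane $\mathrm{PG}(2,q^2)$, the set of points satisfying $X_2X_0^q+X_2^qX_0+X_1^{q+1}=0$; it has $q^3+1$ points, there is a unique tangent line to $\mathcal{H}_q$ at each of its points, and every other line meets $\mathcal{H}_q$ in exactly $q+1$ points ($(q+1)$-secants). A pointset $\mathcal{D}\subset\mathcal{H}_q$ is a $2$-blocking set of $\mathcal{H}_q$ if every $(q+1)$-secant of $\mathcal{H}_q$ contains at least $2$ points of $\mathcal{D}$. *)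

From HB Require Import structures.
From mathcomp Require Import all_boot all_order all_algebra all_field.
From mathcomp Require Import all_classical all_reals all_analysis.
Set Implicit Arguments. Unset Strict Implicit. Unset Printing Implicit Defensive.
Import Order.TTheory GRing.Theory Num.Theory.
Local Open Scope ring_scope.

(* Homogeneous coordinates (X0, X1, X2) of PG(2,F), stored as ((X0,X1),X2),
   normalized so that the first nonzero coordinate equals 1.  Each point of
   PG(2,F) has exactly one normalized representative. *)
Definition normalized (F : fieldType) (x : F * F * F) : bool :=
  let: (x0, x1, x2) := x in
  [|| x0 == 1, (x0 == 0) && (x1 == 1) | [&& x0 == 0, x1 == 0 & x2 == 1]].

Definition proj_point (F : finFieldType) := {x : F * F * F | normalized x}.

Definition proj_line (F : finFieldType) := {a : F * F * F | normalized a}.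

Definition incident (F : finFieldType) (l : proj_line F) (P : proj_point F) : bool :=
  let: (a0, a1, a2) := val l in
  let: (x0, x1, x2) := val P in
  a0 * x0 + a1 * x1 + a2 * x2 == 0.

Definition points_on (F : finFieldType) (l : proj_line F) : {set proj_point F} :=
  [set P | incident l P].

Definition hermitian_curve (F : finFieldType) (q : nat) : {set proj_point F} :=
  [set P | let: (x0, x1, x2) := val P in
           x2 * x0 ^+ q + x2 ^+ q * x0 + x1 ^+ q.+1 == 0].

Definition secant_line (F : finFieldType) (q : nat) (l : proj_line F) : bool :=
  #|hermitian_curve F q :&: points_on l| == q.+1.

Definition two_blocking_set (F : finFieldType) (q : nat) (D : {set proj_point F}) : Prop :=
  D \subset hermitian_curve F q /\
  forall l : proj_line F, secant_line q l -> (2 <= #|D :&: points_on l|)%N.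

Definition log2 (R : realType) (x : R) : R := ln x / ln 2.

From HB Require Import structures.
From mathcomp Require Import all_boot all_order all_algebra all_field.
From mathcomp Require Import ring lra zify.
Import Order.TTheory GRing.Theory Num.Theory.

Set Implicit Arguments.
Unset Strict Implicit.
Unset Printing Implicit Defensive.

Local Open Scope ring_scope.

(* Write F = GF(q^2).  An affine point (1, x1, x2) lies on H_q iff x2 + x2^q = -x1^(q+1),
   so above every abscissa x1 there are exactly q points of H_q.  For a line l not through
   (0:0:1) the abscissae of the points of H_q on l form a set X_l, of size q+1 when l is a
   secant, and X_l meets every F_q-line { y + t u | t in F_q } of the plane F = AG(2,q) in at
   most two points, the curve equation being quadratic in t after raising it to the q-th
   power.  Double counting then shows that half of all F_q-lines meet X_l twice, so greedily
   k F_q-lines meet every such X_l twice as soon as 2^k exceeds the number of lines of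
   PG(2,q^2), e.g. for k = 6 ceil(log2 q) + 1.  The points of H_q above these F_q-lines, one
   point above each abscissa and the point (0:0:1) form a 2-blocking set of size at most
   (k + 1) q^2 + 1; the secants through (0:0:1) are blocked by (0:0:1) and a point above a
   single abscissa.  The bound on r makes this size smaller than the upper end of
   the window, and adding points of H_q keeps the set 2-blocking, which reaches a size
   inside the window since its length exceeds 1 and its lower end is below q^3. *)

Section FinsetCounting.

Local Open Scope nat_scope.

Definition offdiag (T : finType) (A : {set T}) : {set T * T} :=
  [set w | [&& w.1 \in A, w.2 \in A & w.1 != w.2]].

Lemma card_offdiag (T : finType) (A : {set T}) : #|offdiag A| = #|A| * (#|A|).-1.
Proof.
have -> : offdiag A = setX A A :\: [set (x, x) | x in A].
  apply/setP => -[a b]; rewrite !inE /=.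
  have -> : ((a, b) \in [set (x, x) | x in A]) = (a \in A) && (a == b).
    by apply/imsetP/andP => [[x xA [-> ->]] | [aA /eqP <-]]; [rewrite xA | exists a].
  by case: (a \in A); case: (b \in A); rewrite /= ?andbT ?andbF.
have diag_sub : [set (x, x) | x in A] \subset setX A A.
  by apply/subsetP => _ /imsetP [x xA ->]; rewrite inE /= xA.
rewrite cardsD cardsX (setIidPr diag_sub) card_imset; last by move=> x y [].
by rewrite -subn1 mulnBr muln1.
Qed.

Lemma mem_card_le2 (T : finType) (S : {set T}) (x x' z : T) :
  #|S| <= 2 -> x != x' -> [/\ x \in S, x' \in S & z \in S] -> z = x \/ z = x'.
Proof.
move=> S_le2 xx' [xS x'S zS].
have [-> | zx] := eqVneq z x; first by left.
have [-> | zx'] := eqVneq z x'; first by right.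
suff : 3 <= #|S| by rewrite leqNgt ltnS S_le2.
rewrite cardE; apply: (uniq_leq_size (s1 := [:: x; x'; z])).
- by rewrite /= !inE negb_or xx' eq_sym zx eq_sym zx'.
- by move=> w; rewrite !inE mem_enum => /or3P [] /eqP ->.
Qed.

Lemma card_setI_sum (T : finType) (A B : {set T}) : #|A :&: B| = \sum_(a in A) (a \in B).
Proof.
rewrite (big_setID B) /= [X in _ + X]big1 ?addn0 => [|a].
  by rewrite -sum1_card; apply: eq_bigr => a; rewrite inE => /andP [_ ->].
by rewrite !inE => /andP [/negbTE ->].
Qed.

Lemma exists_half_cover (I T : finType) (good : I -> T -> bool) (J : {set I}) (S : {set T}) :
  0 < #|J| -> (forall b, b \in S -> #|J| <= 2 * #|J :&: [set i | good i b]|) ->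
  exists2 i, i \in J & #|S| <= 2 * #|S :&: [set b | good i b]|.
Proof.
move=> J_gt0 S_half; have /card_gt0P [i0 Ji0] := J_gt0.
pose c i := #|S :&: [set b | good i b]|.
have [i Ji c_max] : exists2 i, i \in J & forall j, j \in J -> c j <= c i.
  by case: (arg_maxnP c Ji0) => i Ji c_max; exists i.
exists i => //; rewrite -(@leq_pmul2r #|J|) //.
have double_count : \sum_(j in J) c j = \sum_(b in S) #|J :&: [set j | good j b]|.
  rewrite /c; under eq_bigr do rewrite card_setI_sum; rewrite exchange_big /=.
  by apply: eq_bigr => b _; rewrite card_setI_sum; apply: eq_bigr => j _; rewrite !inE.
apply: leq_trans (_ : 2 * \sum_(j in J) c j <= _).
  by rewrite double_count big_distrr -sum_nat_const /=; apply: leq_sum.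
rewrite -mulnA leq_mul2l mulnC -sum_nat_const; apply/orP; right.
by apply: leq_sum => j /c_max.
Qed.

Lemma greedy_cover (I T : finType) (good : I -> T -> bool) (J : {set I}) (k : nat) (S : {set T}) :
  0 < #|J| -> (forall b, b \in S -> #|J| <= 2 * #|J :&: [set i | good i b]|) ->
  #|S| < 2 ^ k ->
  exists s : seq I, size s <= k /\ forall b, b \in S -> exists2 i, i \in s & good i b.
Proof.
move=> J_gt0; elim: k S => [|k IHk] S S_half.
  by rewrite expn0 ltnS leqn0 => /eqP/cards0_eq ->; exists [::]; split=> // b; rewrite inE.
have [i Ji S_i] := exists_half_cover J_gt0 S_half.
set S' := S :\: [set b | good i b]; rewrite expnS => S_lt.
have S'_half b : b \in S' -> #|J| <= 2 * #|J :&: [set i | good i b]|.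
  by rewrite inE => /andP [_ /S_half].
have S'_lt : #|S'| < 2 ^ k by have := cardsID [set b | good i b] S; rewrite -/S'; lia.
have [s [size_s s_cover]] := IHk S' S'_half S'_lt.
exists (i :: s); split=> // b Sb; have [good_ib | bad_ib] := boolP (good i b).
  by exists i; rewrite ?mem_head.
have [|j sj good_jb] := s_cover b; first by rewrite !inE bad_ib.
by exists j; rewrite ?inE ?sj ?orbT.
Qed.

Lemma card_bigcup_seq_leq (T I : finType) (s : seq I) (G : I -> {set T}) (m : nat) :
  (forall i, #|G i| <= m) -> #|\bigcup_(i <- s) G i| <= size s * m.
Proof.
move=> G_le; elim: s => [|i s IHs]; first by rewrite big_nil cards0.
by rewrite big_cons mulSn (leq_trans (leq_card_setU _ _)) ?leq_add.
Qed.

Lemma exists_card_between (T : finType) (A C : {set T}) (n : nat) :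
  A \subset C -> #|A| <= n <= #|C| ->
  exists D : {set T}, [/\ A \subset D, D \subset C & #|D| = n].
Proof.
move=> AC /andP [An]; rewrite -(subnKC An); elim: (n - #|A|) => [|d IHd] nC.
  by exists A; rewrite addn0.
have [|D [AD DC cardD]] := IHd; first by rewrite (leq_trans _ nC) // leq_add2l.
have /properP [_ [x Cx Dx]] : D \proper C by rewrite properEcard DC cardD -addnS.
exists (x |: D); split; first exact: subset_trans AD (subsetUr _ _).
- by rewrite subUset sub1set Cx DC.
- by rewrite cardsU1 Dx cardD addnS.
Qed.

End FinsetCounting.

Lemma card_roots_leq (R : finIdomainType) (p : {poly R}) :
  p != 0 -> (#|[set x | root p x]| <= (size p).-1)%N.
Proof.
move=> p_neq0; rewrite cardE -ltnS; apply: leq_trans (leqSpred _).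
by apply: max_poly_roots => //; [apply/allP => x; rewrite mem_enum inE | exact: enum_uniq].
Qed.

Lemma card_roots_quadratic (R : finIdomainType) (a b c : R) :
  a != 0 -> (#|[set x : R | (a * x ^+ 2 + b * x + c == 0)%R]| <= 2)%N.
Proof.
move=> a_neq0; pose p := a *: 'X^2 + b *: 'X + c%:P.
have size_p : size p = 3%N.
  rewrite /p -addrA size_polyDl ?size_scale ?size_polyXn //.
  apply: leq_ltn_trans (size_polyD _ _) _; rewrite gtn_max.
  rewrite (leq_ltn_trans (size_scale_leq _ _)) ?size_polyX //.
  exact: leq_ltn_trans (size_polyC_leq1 _) _.
have p_neq0 : p != 0 by rewrite -size_poly_eq0 size_p.
have := card_roots_leq p_neq0; rewrite size_p; apply: leq_trans.
by apply: subset_leq_card; apply/subsetP => x; rewrite !inE /root /p !hornerE.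
Qed.

Lemma two_blocking_setS (F : finFieldType) (q : nat) (D D' : {set proj_point F}) :
  two_blocking_set q D -> D \subset D' -> D' \subset hermitian_curve F q ->
  two_blocking_set q D'.
Proof.
move=> [_ D_blocks] DD' D'H; split=> // l /D_blocks /leq_trans; apply.
exact/subset_leq_card/setSI.
Qed.

Section HermitianCurve.

Variables (F : finFieldType) (q : nat).
Hypothesis frobD : forall x y : F, (x + y) ^+ q = x ^+ q + y ^+ q.
Hypothesis frobK : forall x : F, (x ^+ q) ^+ q = x.
Hypothesis q_gt1 : (1 < q)%N.
Hypothesis card_F : #|F| = (q * q)%N.

Local Notation H := (hermitian_curve F q).

Lemma frobN (x : F) : (- x) ^+ q = - x ^+ q.
Proof.
apply: (addrI (x ^+ q)); rewrite -frobD !subrr expr0n.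
by case: q q_gt1.
Qed.

Lemma frobB (x y : F) : (x - y) ^+ q = x ^+ q - y ^+ q.
Proof. by rewrite frobD frobN. Qed.

Definition Fq : {set F} := [set t | t ^+ q == t].
Definition trace_kernel : {set F} := [set s | s ^+ q + s == 0].
Definition trace (x : F) : F := x + x ^+ q.

Lemma card_roots_Xq_addX (c : F) : (#|[set x | (x ^+ q + c * x == 0)%R]| <= q)%N.
Proof.
have size_p : size ('X^q + c *: 'X : {poly F}) = q.+1.
  rewrite size_polyDl ?size_polyXn //.
  by apply: leq_ltn_trans (size_scale_leq _ _) _; rewrite size_polyX.
have p_neq0 : ('X^q + c *: 'X : {poly F}) != 0 by rewrite -size_poly_eq0 size_p.
have := card_roots_leq p_neq0; rewrite size_p; apply: leq_trans.
by apply: subset_leq_card; apply/subsetP => x; rewrite !inE /root !hornerE.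
Qed.

Lemma card_Fq_leq : (#|Fq| <= q)%N.
Proof.
apply: leq_trans (card_roots_Xq_addX (-1)); apply: subset_leq_card.
by apply/subsetP => x; rewrite !inE mulN1r subr_eq0.
Qed.

Lemma card_trace_kernel_leq : (#|trace_kernel| <= q)%N.
Proof.
apply: leq_trans (card_roots_Xq_addX 1); apply: subset_leq_card.
by apply/subsetP => x; rewrite !inE mul1r.
Qed.

Lemma trace_Fq x : trace x \in Fq.
Proof. by rewrite inE /trace frobD frobK addrC. Qed.

Lemma traceB x y : trace (x - y) = trace x - trace y.
Proof. by rewrite /trace frobB opprD addrACA. Qed.

Local Notation image_trace := [set trace x | x in [set: F]].

Lemma card_F_leq_image_kernel : (#|F| <= #|image_trace| * #|trace_kernel|)%N.
Proof.
pose pre k := odflt 0 [pick y | trace y == k].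
have preK x : trace (pre (trace x)) = trace x.
  by rewrite /pre; case: pickP => [y /eqP // | /(_ x)]; rewrite eqxx.
pose f x := (trace x, x - pre (trace x)).
have f_inj : injective f by move=> x y [e]; rewrite /f e => /addIr.
rewrite -cardsX -cardsT -(card_imset _ f_inj); apply: subset_leq_card.
apply/subsetP => _ /imsetP [x _ ->]; rewrite inE /= imset_f ?inE //=.
by have := traceB x (pre (trace x)); rewrite preK subrr /trace addrC => ->.
Qed.

Lemma image_trace_sub : image_trace \subset Fq.
Proof. by apply/subsetP => _ /imsetP [x _ ->]; apply: trace_Fq. Qed.

Lemma card_Fq : #|Fq| = q.
Proof.
apply/eqP; rewrite eqn_leq card_Fq_leq /= -(@leq_pmul2r q) ?(ltnW q_gt1) //.
rewrite -card_F (leq_trans card_F_leq_image_kernel) //.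
by rewrite leq_mul ?subset_leq_card ?image_trace_sub ?card_trace_kernel_leq.
Qed.

Lemma card_trace_kernel : #|trace_kernel| = q.
Proof.
apply/eqP; rewrite eqn_leq card_trace_kernel_leq /= -(@leq_pmul2l q) ?(ltnW q_gt1) //.
rewrite -card_F (leq_trans card_F_leq_image_kernel) // leq_mul //.
by rewrite -card_Fq subset_leq_card ?image_trace_sub.
Qed.

Lemma trace_onto k : k \in Fq -> exists x, trace x = k.
Proof.
have -> : Fq = image_trace.
  apply/esym/eqP; rewrite eqEcard image_trace_sub card_Fq.
  rewrite -(@leq_pmul2r q) ?(ltnW q_gt1) // -card_F -card_trace_kernel.
  exact: card_F_leq_image_kernel.
by move=> /imsetP [x _ ->]; exists x.
Qed.

Lemma normalized_affine (x1 x2 : F) : normalized (1, x1, x2).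
Proof. by rewrite /normalized eqxx. Qed.

Lemma normalized_infinity : normalized ((0 : F), (0 : F), (1 : F)).
Proof. by rewrite /normalized eq_sym oner_eq0 /= !eqxx. Qed.

Definition affine_pt (x1 x2 : F) : proj_point F :=
  exist _ (1, x1, x2) (normalized_affine x1 x2).
Definition pt_infinity : proj_point F := exist _ (0, 0, 1) normalized_infinity.

Lemma affine_pt_inj x1 x2 y1 y2 : affine_pt x1 x2 = affine_pt y1 y2 -> x1 = y1 /\ x2 = y2.
Proof. by case. Qed.

Lemma affine_pt_neq_infinity x1 x2 : affine_pt x1 x2 != pt_infinity.
Proof. by apply/eqP => -[] /eqP; rewrite oner_eq0. Qed.

Variant proj_point_spec (P : proj_point F) : Prop :=
  | AffinePt x1 x2 of P = affine_pt x1 x2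
  | LineAtInfinityPt x2 of val P = (0, 1, x2)
  | InfinityPt of P = pt_infinity.

Lemma proj_pointP P : proj_point_spec P.
Proof.
case: P => [[[x0 x1] x2] nP]; have := nP.
case/or3P => [/eqP e0 | /andP [/eqP e0 /eqP e1] | /and3P [/eqP e0 /eqP e1 /eqP e2]].
- by apply: (@AffinePt _ x1 x2); apply: val_inj; rewrite /= e0.
- by apply: (@LineAtInfinityPt _ x2); rewrite /= e0 e1.
- by apply: InfinityPt; apply: val_inj; rewrite /= e0 e1 e2.
Qed.

Lemma hermitian_affine x1 x2 : (affine_pt x1 x2 \in H) = (x2 + x2 ^+ q + x1 ^+ q.+1 == 0).
Proof. by rewrite inE /= expr1n !mulr1. Qed.

Lemma hermitian_infinity : pt_infinity \in H.
Proof. by rewrite inE /= !expr0n /= -(subnKC q_gt1) /= !(mulr0, mul0r, addr0). Qed.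

Lemma hermitianN_line_at_infinity (P : proj_point F) x2 : val P = (0, 1, x2) -> P \notin H.
Proof.
by move=> eP; rewrite inE eP /= expr1n expr0n -(subnKC q_gt1) !(mulr0, add0r) oner_eq0.
Qed.

Lemma norm_Fq (x : F) : x ^+ q.+1 \in Fq.
Proof. by rewrite inE exprS exprMn frobK mulrC. Qed.

Definition hermitian_lift (x1 : F) : F := odflt 0 [pick y | trace y == - x1 ^+ q.+1].

Lemma trace_hermitian_lift x1 : trace (hermitian_lift x1) = - x1 ^+ q.+1.
Proof.
have [|y ty] := trace_onto (k := - x1 ^+ q.+1).
  by have := norm_Fq x1; rewrite !inE frobN => /eqP ->.
by rewrite /hermitian_lift; case: pickP => [z /eqP // | /(_ y)]; rewrite ty eqxx.
Qed.

Definition lift_pt (x1 : F) : proj_point F := affine_pt x1 (hermitian_lift x1).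

Lemma hermitian_lift_pt x1 : lift_pt x1 \in H.
Proof.
by rewrite hermitian_affine; have := trace_hermitian_lift x1; rewrite /trace => ->; rewrite addNr.
Qed.

Lemma hermitian_affineE x1 x2 :
  (affine_pt x1 x2 \in H) = (x2 - hermitian_lift x1 \in trace_kernel).
Proof.
have lift_eq := trace_hermitian_lift x1; rewrite /trace in lift_eq.
rewrite hermitian_affine inE frobB -[x1 ^+ q.+1]opprK -lift_eq.
by congr (_ == 0); ring.
Qed.

Lemma card_hermitian_geq : (q * q * q <= #|H|)%N.
Proof.
pose f (w : F * F) := affine_pt w.1 (hermitian_lift w.1 + w.2).
have f_inj : injective f by move=> [a b] [c d] /affine_pt_inj /= [-> /addrI ->].
have sub : f @: setX [set: F] trace_kernel \subset H.
  apply/subsetP => _ /imsetP [[a b] /setXP [_ kb] ->].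
  by rewrite hermitian_affineE addrC addKr.
apply: leq_trans (subset_leq_card sub).
by rewrite card_imset // cardsX cardsT card_F card_trace_kernel.
Qed.

Definition hermitian_over (S : {set F}) : {set proj_point F} :=
  [set P in H | ((val P).1.1 == 1) && ((val P).1.2 \in S)].

Lemma card_hermitian_over S : (#|hermitian_over S| <= #|S| * q)%N.
Proof.
pose g (P : proj_point F) := ((val P).1.2, (val P).2 - hermitian_lift (val P).1.2).
have g_inj : {in hermitian_over S &, injective g}.
  move=> [[[a0 a1] a2] ?] [[[b0 b1] b2] ?]; rewrite !inE /=.
  move=> /and3P [_ /eqP e0 _] /and3P [_ /eqP e0' _] [e1 e2].
  rewrite e1 in e2; move/addIr: e2 => e2.
  by apply: val_inj; rewrite /= e0 e0' e1 e2.
rewrite -(card_in_imset g_inj) -card_trace_kernel -cardsX.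
apply: subset_leq_card; apply/subsetP => _ /imsetP [[[[a0 a1] a2] nP] + ->].
rewrite inE /= => /and3P [HP /eqP e0 Sa1]; rewrite inE /= Sa1 -hermitian_affineE.
by rewrite (_ : affine_pt a1 a2 = Sub (a0, a1, a2) nP) //; apply: val_inj; rewrite /= e0.
Qed.

Definition line_ordinate (l : proj_line F) (x1 : F) : F :=
  let: (a0, a1, a2) := val l in - (a0 + a1 * x1) / a2.

Definition hermitian_abscissae (l : proj_line F) : {set F} :=
  [set x1 | affine_pt x1 (line_ordinate l x1) \in H].

(* F is viewed as the affine plane AG(2, q) over F_q. *)
Definition Fq_line (y u : F) : {set F} := [set y + t * u | t in Fq].

Lemma mem_Fq_line y u t : t \in Fq -> y + t * u \in Fq_line y u.
Proof. by move=> Ft; apply/imsetP; exists t. Qed.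

Lemma affine_pt_on_line l x1 :
  (val l).2 != 0 -> affine_pt x1 (line_ordinate l x1) \in points_on l.
Proof.
case: l => [[[a0 a1] a2] nl] /= a2_neq0; rewrite inE /incident /line_ordinate /=.
by apply/eqP; field.
Qed.

Lemma hermitian_on_line l : (val l).2 != 0 ->
  H :&: points_on l = [set affine_pt x1 (line_ordinate l x1) | x1 in hermitian_abscissae l].
Proof.
move=> a2_neq0; apply/setP => P; apply/idP/idP; last first.
  by move=> /imsetP [x1 + ->]; rewrite in_setI affine_pt_on_line // andbT inE.
rewrite in_setI => /andP [HP]; rewrite inE.
case: (proj_pointP P) HP => [x1 x2 -> HP | x2 eP | ->].
- move=> l_P; have x2E : x2 = line_ordinate l x1.
    move: l_P a2_neq0; case: l => [[[a0 a1] a2] nl] /= /eqP l_eq a2_neq0.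
    by apply: (mulIf a2_neq0); rewrite divfK // -[RHS]addr0 -l_eq; ring.
  by apply/imsetP; exists x1; [rewrite inE -x2E | rewrite x2E].
- by move/negP: (hermitianN_line_at_infinity eP).
- case: l a2_neq0 => [[[a0 a1] a2] nl] /= a2_neq0 _.
  by rewrite /incident /= !mulr0 !add0r mulr1 (negbTE a2_neq0).
Qed.

Lemma card_hermitian_on_line l :
  (val l).2 != 0 -> #|H :&: points_on l| = #|hermitian_abscissae l|.
Proof.
by move=> a2_neq0; rewrite hermitian_on_line // card_in_imset // => x y _ _ /affine_pt_inj [].
Qed.

(* On an F_q-line the curve equation, after raising to the power q, becomes quadratic in t. *)
Lemma card_Fq_line_hermitian l y u : (val l).2 != 0 -> u != 0 ->
  (#|Fq_line y u :&: hermitian_abscissae l| <= 2)%N.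
Proof.
case: l => [[[a0 a1] a2] nl] /= a2_neq0 u_neq0.
set l : proj_line F := exist _ (a0, a1, a2) nl.
pose A := u * u ^+ q.
pose B := - a1 / a2 * u - a1 ^+ q / a2 ^+ q * u ^+ q + y * u ^+ q + u * y ^+ q.
pose C := - a1 / a2 * y - a0 / a2 - a1 ^+ q / a2 ^+ q * y ^+ q - a0 ^+ q / a2 ^+ q + y * y ^+ q.
have A_neq0 : A != 0 by rewrite mulf_neq0 // expf_neq0.
set T := [set t in Fq | y + t * u \in hermitian_abscissae l].
have -> : Fq_line y u :&: hermitian_abscissae l = [set y + t * u | t in T].
  apply/setP => x; apply/idP/imsetP => [|[t + ->]].
    by rewrite inE => /andP [/imsetP [t Ft ->] Xx]; exists t; rewrite // inE Ft.
  by rewrite inE => /andP [Ft Xt]; rewrite in_setI Xt mem_Fq_line.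
apply: leq_trans (leq_imset_card _ _) (leq_trans _ (card_roots_quadratic B C A_neq0)).
apply: subset_leq_card; apply/subsetP => t; rewrite !inE => /andP [/eqP Ft].
rewrite /l /line_ordinate /= expr1n !mulr1 => /eqP on_H; apply/eqP; rewrite -on_H.
rewrite [(y + t * u) ^+ q.+1]exprS !exprMn !frobN !exprVn !frobD !exprMn !frobD !exprMn Ft.
rewrite /A /B /C; move: (y ^+ q) (u ^+ q) (a1 ^+ q) (a0 ^+ q) (a2 ^+ q)^-1 a2^-1.
by move=> yq uq a1q a0q a2qV a2V; ring.
Qed.

Definition Fq_line_params : {set F * F} := setX [set: F] [set~ 0].

Lemma card_Fq_line_params : #|Fq_line_params| = (q * q * (q * q).-1)%N.
Proof. by rewrite cardsX cardsT cardsC1 card_F. Qed.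

Lemma Fq_line_through (x x' t t' : F) : x != x' -> t != t' ->
  let u := (x' - x) / (t' - t) in
  [/\ u != 0, x - t * u + t * u = x & x - t * u + t' * u = x'].
Proof.
move=> xx' tt' u; have tt'_neq0 : t' - t != 0 by rewrite subr_eq0 eq_sym.
split; rewrite ?subrK //; last by rewrite /u; field.
by rewrite mulf_neq0 ?invr_eq0 // subr_eq0 eq_sym.
Qed.

Definition line_through_pairs (w : F * F * (F * F)) : F * F * bool :=
  let: ((x, x'), (t, t')) := w in
  let u := (x' - x) / (t' - t) in ((x - t * u, u), (enum_rank x < enum_rank x')%N).

Section RichFqLines.

Variable X : {set F}.
Hypothesis card_Fq_line_X : forall y u, u != 0 -> (#|Fq_line y u :&: X| <= 2)%N.

Definition rich_Fq_lines : {set F * F} :=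
  [set i in Fq_line_params | (2 <= #|Fq_line i.1 i.2 :&: X|)%N].

Local Notation pairs := (setX (offdiag X) (offdiag Fq)).

Lemma mem_Fq_line_X y u t x :
  t \in Fq -> x \in X -> y + t * u = x -> x \in Fq_line y u :&: X.
Proof. by move=> Ft + ex; rewrite in_setI -ex mem_Fq_line. Qed.

(* The line together with the order of the two points recovers both pairs,
   since the line meets X in these two points only. *)
Lemma line_through_pairs_inj : {in pairs &, injective line_through_pairs}.
Proof.
move=> [[x1 x1'] [t1 t1']] [[x2 x2'] [t2 t2']] /setXP [+ +] /setXP [+ +].
rewrite ![_ \in offdiag _]inE /= => /and3P [X1 X1' xx1] /and3P [T1 T1' tt1].
move=> /and3P [X2 X2' xx2] /and3P [T2 T2' tt2].
have [u_neq0 e1 e1'] := Fq_line_through xx1 tt1.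
have [_ e2 e2'] := Fq_line_through xx2 tt2.
rewrite /line_through_pairs; set u := (x1' - x1) / _ in u_neq0 e1 e1' *.
set y := x1 - t1 * u in e1 e1' *.
case=> y_eq u_eq ranks; rewrite -u_eq in y_eq e2 e2'; rewrite -y_eq in e2 e2'.
have le2 := card_Fq_line_X y u_neq0.
have S1 := mem_Fq_line_X T1 X1 e1; have S1' := mem_Fq_line_X T1' X1' e1'.
have [] := mem_card_le2 le2 xx1 (And3 S1 S1' (mem_Fq_line_X T2 X2 e2)) => ex2;
  have [] := mem_card_le2 le2 xx1 (And3 S1 S1' (mem_Fq_line_X T2' X2' e2')) => ex2';
  rewrite ex2 ex2' in e2 e2' ranks xx2 *; rewrite ?eqxx // in xx2.
- by move: e2 e2'; rewrite -{1}e1 -{1}e1' => /addrI /(mulIf u_neq0) -> /addrI /(mulIf u_neq0) ->.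
- move: ranks; case: ltngtP => // /val_inj /enum_rank_inj x1E.
  by rewrite x1E eqxx in xx1.
Qed.

Lemma line_through_pairs_rich :
  line_through_pairs @: pairs \subset setX rich_Fq_lines [set: bool].
Proof.
apply/subsetP => _ /imsetP [[[x x'] [t t']] /setXP [+ +] ->].
rewrite ![_ \in offdiag _]inE /= => /and3P [Xx Xx' xx'] /and3P [Tt Tt' tt'].
have [u_neq0 e e'] := Fq_line_through xx' tt'.
rewrite inE in_setT andbT inE /= !inE u_neq0 /=; apply: leq_trans (_ : #|[set x; x']| <= _)%N.
  by rewrite cards2 xx'.
apply/subset_leq_card/subsetP => z /set2P [] ->.
- exact: mem_Fq_line_X Tt Xx e.
- exact: mem_Fq_line_X Tt' Xx' e'.
Qed.

Lemma card_rich_Fq_lines : (#|X| * (#|X|).-1 * (q * q.-1) <= 2 * #|rich_Fq_lines|)%N.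
Proof.
have := subset_leq_card line_through_pairs_rich.
rewrite (card_in_imset line_through_pairs_inj) !cardsX !card_offdiag card_Fq.
by rewrite cardsT card_bool [(2 * _)%N]mulnC.
Qed.

End RichFqLines.

Definition lift_pts : {set proj_point F} := [set lift_pt x | x in [set: F]].

(* The secants through pt_infinity are the lines a0 X0 + X1 = 0. *)
Lemma vertical_secant_blocked (l : proj_line F) : (val l).2 = 0 -> secant_line q l ->
  (2 <= #|(pt_infinity |: lift_pts) :&: points_on l|)%N.
Proof.
case: l => [[[a0 a1] a2] nl] /= a2_eq0; subst a2.
set l : proj_line F := exist _ (a0, a1, 0) nl; have [a1_eq0 | a1_neq0] := eqVneq a1 0.
  have a0_eq1 : a0 = 1.
    by have := nl; rewrite a1_eq0 /normalized [0 == 1]eq_sym oner_eq0 !andbF !orbF => /eqP.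
  have HlE : H :&: points_on l \subset [set pt_infinity].
    apply/subsetP => P; rewrite in_setI => /andP [HP]; rewrite inE.
    case: (proj_pointP P) HP => [x1 x2 -> _ | x2 eP | -> _]; last by rewrite inE.
    - by rewrite /incident /= a0_eq1 a1_eq0 mul1r !mul0r !addr0 oner_eq0.
    - by move/negP: (hermitianN_line_at_infinity eP).
  rewrite /secant_line => /eqP card_Hl; have := subset_leq_card HlE.
  by rewrite card_Hl cards1; lia.
move=> _; set x1 := - a0 / a1.
have sub : [set pt_infinity; lift_pt x1] \subset (pt_infinity |: lift_pts) :&: points_on l.
  apply/subsetP => P /set2P [] ->; rewrite !inE /incident /=.
    by rewrite eqxx /= !mulr0 mul0r !addr0.
  by rewrite (imset_f _ (in_setT x1)) orbT /=; apply/eqP; rewrite /x1; field.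
apply: leq_trans (subset_leq_card sub); rewrite cards2 eq_sym.
by have := affine_pt_neq_infinity x1 (hermitian_lift x1); rewrite /lift_pt => ->.
Qed.

Lemma affine_secant_blocked (l : proj_line F) y u : (val l).2 != 0 ->
  (2 <= #|Fq_line y u :&: hermitian_abscissae l|)%N ->
  (2 <= #|hermitian_over (Fq_line y u) :&: points_on l|)%N.
Proof.
move=> a2_neq0 /leq_trans; apply; set S := _ :&: _.
have sub : [set affine_pt x (line_ordinate l x) | x in S] \subset
           hermitian_over (Fq_line y u) :&: points_on l.
  apply/subsetP => _ /imsetP [x /setIP [Lx Xx] ->].
  rewrite in_setI affine_pt_on_line // andbT /hermitian_over in_set /= eqxx Lx !andbT.
  by move: Xx; rewrite in_set.
apply: leq_trans (subset_leq_card sub); rewrite card_in_imset //.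
by move=> x x' _ _ /affine_pt_inj [].
Qed.

Definition blocking_candidate (s : seq (F * F)) : {set proj_point F} :=
  pt_infinity |: (lift_pts :|: \bigcup_(i <- s) hermitian_over (Fq_line i.1 i.2)).

Lemma blocking_candidate_sub s : blocking_candidate s \subset H.
Proof.
rewrite !subUset sub1set hermitian_infinity //=; apply/andP; split.
  by apply/subsetP => _ /imsetP [x _ ->]; apply: hermitian_lift_pt.
by rewrite bigcup_seq; apply/bigcupsP => i _; apply/subsetP => P; rewrite inE => /andP [].
Qed.

Lemma card_blocking_candidate s :
  (#|blocking_candidate s| <= 1 + q * q + size s * (q * q))%N.
Proof.
rewrite -addnA (leq_trans (leq_card_setU _ _)) // cards1 leq_add2l.
rewrite (leq_trans (leq_card_setU _ _)) // leq_add //.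
  by rewrite (leq_trans (leq_imset_card _ _)) // cardsT card_F.
apply: card_bigcup_seq_leq => i; apply: leq_trans (card_hermitian_over _) _.
by rewrite leq_mul2r (leq_trans (leq_imset_card _ _)) ?card_Fq ?orbT.
Qed.

Lemma affine_secant_half (l : proj_line F) : secant_line q l -> (val l).2 != 0 ->
  (#|Fq_line_params| <= 2 * #|rich_Fq_lines (hermitian_abscissae l)|)%N.
Proof.
move=> /eqP secant a2_neq0.
have X_le2 y u : u != 0 -> (#|Fq_line y u :&: hermitian_abscissae l| <= 2)%N.
  exact: card_Fq_line_hermitian.
have := card_rich_Fq_lines X_le2; rewrite -card_hermitian_on_line // secant card_Fq_line_params.
by apply: leq_trans; rewrite -(subnKC q_gt1) /=; nia.
Qed.

Lemma small_two_blocking_set k : (#|[set: proj_line F]| < 2 ^ k)%N ->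
  exists D : {set proj_point F}, two_blocking_set q D /\ (#|D| <= 1 + q * q + k * (q * q))%N.
Proof.
move=> card_lines_lt; pose good i l := i \in rich_Fq_lines (hermitian_abscissae l).
set S := [set l : proj_line F | secant_line q l && ((val l).2 != 0)].
have params_gt0 : (0 < #|Fq_line_params|)%N by rewrite card_Fq_line_params; nia.
have S_half l : l \in S ->
    (#|Fq_line_params| <= 2 * #|Fq_line_params :&: [set i | good i l]|)%N.
  rewrite inE => /andP [secant a2_neq0].
  have -> : [set i | good i l] = rich_Fq_lines (hermitian_abscissae l).
    by apply/setP => i; rewrite inE.
  rewrite (setIidPr _) ?affine_secant_half //.
  by apply/subsetP => i; rewrite inE => /andP [].
have S_lt : (#|S| < 2 ^ k)%N.
  by apply: leq_ltn_trans card_lines_lt; apply/subset_leq_card/subsetT.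
have [s [size_s s_blocks]] := greedy_cover params_gt0 S_half S_lt.
exists (blocking_candidate s); split; last first.
  by apply: leq_trans (card_blocking_candidate s) _; rewrite leq_add2l leq_mul2r size_s orbT.
split=> [|l secant]; first exact: blocking_candidate_sub.
have [a2_eq0 | a2_neq0] := eqVneq (val l).2 0.
  apply: leq_trans (vertical_secant_blocked a2_eq0 secant) _.
  by apply/subset_leq_card/setSI; rewrite setUS // subsetUl.
have [|i si] := s_blocks l; first by rewrite inE secant a2_neq0.
rewrite /good inE => /andP [_ good_il].
apply: leq_trans (affine_secant_blocked a2_neq0 good_il) _.
apply/subset_leq_card/setSI/subsetP => P PiS; rewrite !inE; apply/orP; right; apply/orP; right.
by rewrite bigcup_seq; apply/bigcupP; exists i.
Qed.

End HermitianCurve.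

Lemma frobD_prime_power (F : finFieldType) (p k : nat) :
  prime p -> #|F| = (p ^ k * p ^ k)%N ->
  forall x y : F, (x + y) ^+ (p ^ k) = x ^+ (p ^ k) + y ^+ (p ^ k).
Proof.
move=> p_prime card_F x y; apply: exprDn_pchar; rewrite pnatX pnatE //.
by rewrite (card_finPcharP (n := k + k)) // expnD.
Qed.

Lemma frobK_card (F : finFieldType) (q : nat) :
  #|F| = (q * q)%N -> forall x : F, (x ^+ q) ^+ q = x.
Proof. by move=> card_F x; rewrite -exprM -card_F expf_card. Qed.

Lemma card_proj_line_lt (F : finFieldType) (q m : nat) :
  #|F| = (q * q)%N -> (q <= 2 ^ m)%N -> (#|[set: proj_line F]| < 2 ^ (6 * m).+1)%N.
Proof.
move=> card_F q_le; rewrite cardsT card_sig (leq_ltn_trans (max_card _)) //.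
rewrite !card_prod card_F expnS [(6 * m)%N]mulnC expnM.
apply: leq_ltn_trans (_ : _ <= (2 ^ m) ^ 6)%N _; last by rewrite ltn_Pmull ?expn_gt0.
by rewrite !expnS expn0 muln1 !mulnA !leq_mul.
Qed.

From mathcomp Require Import all_classical all_reals all_analysis.

Lemma exists_nat_between (R : realType) (a b : R) (d N : nat) :
  0 <= a -> a + 1 <= b -> d%:R <= b -> a + 1 <= N%:R ->
  exists n : nat, [/\ (d <= n <= maxn d N)%N, a <= n%:R & n%:R <= b].
Proof.
move=> a_ge0 ab db aN; set t := (Num.truncn a).+1.
have a_lt_t : a < t%:R by apply: truncnS_gt.
have t_le : t%:R <= a + 1 by rewrite /t -addn1 natrD lerD2r truncn_le.
exists (maxn d t); split.
- rewrite leq_maxl geq_max leq_maxl leq_max; apply/orP; right.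
  by rewrite -(ler_nat R) (le_trans t_le).
- by rewrite (le_trans (ltW a_lt_t)) // ler_nat leq_maxr.
- by rewrite /maxn; case: ltnP => _; rewrite // (le_trans t_le).
Qed.

Section SizeWindow.

Variables (R : realType) (q r : nat).
Hypothesis q_gt1 : (1 < q)%N.
Hypothesis r_gt1 : (1 < r)%N.
Hypothesis r_small : (r%:R : R) < Num.sqrt (q%:R) / 2 - (2 * log2 (q%:R : R) + 1) / 4.

Local Notation Q := (q%:R : R).
Local Notation L := (log2 Q).
Local Notation Z := ((Q ^+ 3 - 3 * Q ^+ 2 - 2 * Q) / r%:R).
Local Notation c := ((Num.ceil (L + 1))%:~R : R).

Definition window_lower : R := Z + 2 * Q ^+ 2 - Q + 2 - 2 * c.
Definition window_upper : R := Z + 2 * Q ^+ 2 + Q + 2 + 2 * c.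

Let ln2_gt0 : 0 < ln (2 : R).
Proof. by apply: ln_gt0; lra. Qed.

Lemma ltr_nat_log2 (k : nat) : (2 ^ k < q)%N -> k%:R < L.
Proof.
move=> k_lt; have Q_gt0 : 0 < Q by rewrite ltr0n ltnW.
rewrite /log2 ltr_pdivlMr // mulr_natl -lnXn; last lra.
by rewrite ltr_ln ?posrE ?exprn_gt0 // -natrX ltr_nat.
Qed.

Lemma log2_ge0 : 0 <= L.
Proof. by rewrite /log2 divr_ge0 ?ln_ge0 ?ler1n ?(ltnW q_gt1). Qed.

Lemma sqr_sqrt_q : Num.sqrt Q ^+ 2 = Q.
Proof. by rewrite sqr_sqrtr ?ler0n. Qed.

Lemma q_gt16 : 16 < Q.
Proof.
have L_ge0 := log2_ge0; have r_ge2 : 2 <= r%:R :> R by rewrite ler_nat.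
have s_gt4 : 4 < Num.sqrt Q by have := r_small; lra.
by rewrite -sqr_sqrt_q expr2; nra.
Qed.

(* AM-GM: (2L+1)(2 sqrt q - (2L+1)) <= q. *)
Lemma r_log2_lt : r%:R * (8 * L + 4) < Q.
Proof.
have L_ge0 := log2_ge0; have := r_small; set s := Num.sqrt Q => r_lt.
have rL_lt : r%:R * (8 * L + 4) < (s / 2 - (2 * L + 1) / 4) * (8 * L + 4).
  by rewrite ltr_pM2r //; lra.
have sq_ge0 : 0 <= (s - (2 * L + 1)) ^+ 2 by apply: sqr_ge0.
by rewrite -[in X in _ < X]sqr_sqrt_q -/s; nra.
Qed.

Lemma log2_gt4 : 4 < L.
Proof.
rewrite -[4]/(4%N%:R) ltr_nat_log2 // -(ltr_nat R) natrX.
by have := q_gt16; lra.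
Qed.

Lemma Z_bounds : (8 * L + 4) * Q ^+ 2 - (3 * Q ^+ 2 + 2 * Q) / 2 <= Z <= Q ^+ 3 / 2.
Proof.
have r_ge2 : 2 <= r%:R :> R by rewrite ler_nat.
have Q_gt16 := q_gt16; have rL_lt := r_log2_lt.
have Zr : Z * r%:R = Q ^+ 3 - 3 * Q ^+ 2 - 2 * Q by rewrite divfK // pnatr_eq0 -lt0n ltnW.
have rLQ : r%:R * (8 * L + 4) * Q ^+ 2 <= Q ^+ 3.
  by rewrite [Q ^+ 3]exprS ler_pM2r ?exprn_gt0; lra.
have Q2_ge0 : 0 <= 3 * Q ^+ 2 + 2 * Q by rewrite addr_ge0 ?mulr_ge0 ?exprn_ge0 //; lra.
have Q2r : (3 * Q ^+ 2 + 2 * Q) * 2 <= (3 * Q ^+ 2 + 2 * Q) * r%:R by rewrite ler_wpM2l.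
have Q3_ge0 : 0 <= Q ^+ 3 by rewrite exprn_ge0 //; lra.
have Q3r : Q ^+ 3 * 2 <= Q ^+ 3 * r%:R by rewrite ler_wpM2l.
have r_gt0 : 0 < r%:R :> R by lra.
by apply/andP; split; rewrite -(ler_pM2r r_gt0) Zr; lra.
Qed.

Lemma ceil_log2_bounds : L + 1 <= c < L + 2.
Proof.
rewrite ceil_ge /=; have := ceilB1_lt (L + 1).
by rewrite intrD -[(- 1)%:~R]/(- 1); lra.
Qed.

Lemma small_size_le_upper (m : nat) : (2 ^ m.-1 < q)%N -> (0 < m)%N ->
  (1 + q * q + (6 * m).+1 * (q * q))%:R <= window_upper.
Proof.
move=> m_lt m_gt0; have L_gt4 := log2_gt4; have /andP [c_ge _] := ceil_log2_bounds.
have /andP [Z_ge _] := Z_bounds.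
have m_le : m%:R <= L + 1.
  by rewrite -(prednK m_gt0) -addn1 natrD lerD2r ltW // ltr_nat_log2.
have Q_gt0 : 0 < Q by rewrite ltr0n ltnW.
have mQ : m%:R * Q ^+ 2 <= (L + 1) * Q ^+ 2 by rewrite ler_pM2r ?exprn_gt0.
have LQ : 0 <= (2 * L - 4) * Q ^+ 2 by rewrite mulr_ge0 ?exprn_ge0 //; lra.
have Q2_ge0 : 0 <= Q ^+ 2 by rewrite exprn_ge0 // ltW.
have -> : (1 + q * q + (6 * m).+1 * (q * q))%:R = 1 + Q ^+ 2 + (6 * m%:R + 1) * Q ^+ 2 :> R.
  by rewrite -[(6 * m).+1]addn1 !natrD !natrM; ring.
rewrite /window_upper; move: Z_ge mQ LQ c_ge L_gt4 Q2_ge0.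
set Z' := Z; set L' := L; set c' := c; set Q2 := Q ^+ 2.
lra.
Qed.

Lemma window_lower_ge0 : 0 <= window_lower.
Proof.
have L_gt4 := log2_gt4; have Q_gt16 := q_gt16; have /andP [_ c_lt] := ceil_log2_bounds.
have /andP [Z_ge _] := Z_bounds.
have Q2_ge : 16 * Q <= Q ^+ 2 by rewrite expr2 ler_pM2r //; lra.
have LQ2 : L <= L * Q ^+ 2 by rewrite ler_peMr //; lra.
rewrite /window_lower; move: Z_ge Q2_ge LQ2 c_lt L_gt4.
set Z' := Z; set c' := c; set L' := L; set Q2 := Q ^+ 2.
lra.
Qed.

Lemma window_width : window_lower + 1 <= window_upper.
Proof.
have Q_gt16 := q_gt16; have /andP [c_ge _] := ceil_log2_bounds; have L_ge0 := log2_ge0.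
rewrite /window_lower /window_upper; lra.
Qed.

Lemma window_lower_lt_cube : window_lower + 1 <= (q * q * q)%:R.
Proof.
have L_gt4 := log2_gt4; have Q_gt16 := q_gt16; have /andP [c_ge _] := ceil_log2_bounds.
have /andP [_ Z_le] := Z_bounds.
have Q3_ge : 16 * Q ^+ 2 <= Q ^+ 3 by rewrite [Q ^+ 3]exprS ler_pM2r ?exprn_gt0 //; lra.
have Q2_ge : 16 * Q <= Q ^+ 2 by rewrite expr2 ler_pM2r //; lra.
have -> : (q * q * q)%:R = Q ^+ 3 :> R by rewrite !natrM; ring.
rewrite /window_lower; move: Z_le Q3_ge Q2_ge c_ge L_gt4.
set Z' := Z; set c' := c; set L' := L; set Q2 := Q ^+ 2; set Q3 := Q ^+ 3.
lra.
Qed.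

End SizeWindow.

Theorem mainTheorem9 (R : realType) (F : finFieldType) (q r : nat) :
  (exists p n : nat, prime p /\ q = (p ^ n.+1)%N) ->
  odd q ->
  #|F| = (q ^ 2)%N ->
  (r %| q.-1)%N ->
  (1 < r)%N ->
  (r%:R : R) < Num.sqrt (q%:R) / 2 - (2 * log2 (q%:R : R) + 1) / 4 ->
  exists D : {set proj_point F},
    two_blocking_set q D /\
    ((q%:R ^+ 3 - 3 * q%:R ^+ 2 - 2 * q%:R) / r%:R + 2 * q%:R ^+ 2 - q%:R + 2
       - 2 * (Num.ceil (log2 (q%:R : R) + 1))%:~R <= (#|D|%:R : R)) /\
    ((#|D|%:R : R) <= (q%:R ^+ 3 - 3 * q%:R ^+ 2 - 2 * q%:R) / r%:R + 2 * q%:R ^+ 2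
       + q%:R + 2 + 2 * (Num.ceil (log2 (q%:R : R) + 1))%:~R).
Proof.
move=> [p [n [p_prime q_eq]]] _ card_Fq2 _ r_gt1 r_small.
have card_F : #|F| = (q * q)%N by rewrite card_Fq2 mulnn.
have q_gt1 : (1 < q)%N.
  by rewrite q_eq (leq_trans (prime_gt1 p_prime)) // expnS leq_pmulr // expn_gt0 prime_gt0.
have frobD := frobD_prime_power p_prime (etrans card_F (congr2 muln q_eq q_eq)).
rewrite -q_eq in frobD; have frobK := frobK_card card_F.
have [m_gt0 m_lt] : (0 < up_log 2 q)%N /\ (2 ^ (up_log 2 q).-1 < q)%N.
  by rewrite up_log_gt0 q_gt1 up_log_gtn.
have [D0 [D0_blocks card_D0]] := small_two_blocking_set frobD frobK q_gt1 card_F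
  (card_proj_line_lt card_F (up_logP q (isT : (1 < 2)%N))).
have D0_le : (#|D0|%:R : R) <= window_upper R q r.
  by apply: le_trans (small_size_le_upper q_gt1 r_gt1 r_small m_lt m_gt0); rewrite ler_nat.
have [k [/andP [D0_k k_max] lower_k k_upper]] := exists_nat_between
  (window_lower_ge0 q_gt1 r_gt1 r_small) (window_width q_gt1 r_gt1 r_small) D0_le
  (window_lower_lt_cube q_gt1 r_gt1 r_small).
have [|D [D0_D D_H card_D]] := exists_card_between (proj1 D0_blocks) (n := k).
  rewrite D0_k (leq_trans k_max) // geq_max (subset_leq_card (proj1 D0_blocks)).
  exact: card_hermitian_geq.
by exists D; rewrite card_D; split; first exact: two_blocking_setS D0_blocks D0_D D_H.
Qed.
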